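(* Let $n\ge3$ and let $\mathbf A_1,\mathbf A_2,\mathbf A_3,\mathbf A_4$ be algebras whose only operations are ternary operations $t_1,\dots,t_{n-1}$. Suppose that for $j=1,2,3$ there is an element $0\in A_j$ with $t_h(0,y,z)=0$ for $h=1,\dots,n-2$ and $t_h(x,y,0)=0$ for $h=2,\dots,n-1$ (for all $x,y,z\in A_j$), and that in $\mathbf A_4$, $t_1$ is the projection onto the first coordinate, $t_{n-1}$ is the projection onto the third coordinate, and $t_h(x,y,x)=x$ for $h=2,\dots,n-2$. Fix $a,d\in A_4$ and let $B=B(a,d)$ be the set of elements of $E=A_1\times A_2\times A_3\times A_4$ having at least one of the forms $(\ast,0,\ast,a)$, $(0,0,\ast,\ast)$, $(0,\ast,\ast,d)$, $(\ast,\ast,0,\ast)$, where $\ast$ denotes an arbitrary element of the corresponding factor. Then $B$ is the universe of a subalgebra of $\mathbf A_1\times\mathbf A_2\times\mathbf A_3\times\mathbf A_4$. *)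

From mathcomp Require Import all_boot.
Set Implicit Arguments. Unset Strict Implicit. Unset Printing Implicit Defensive.

(* An algebra with ternary operations t_1, ..., t_{n-1} is represented by a
   carrier type A and a family t : nat -> A -> A -> A -> A, of which only the
   indices 1 <= h <= n-1 are meaningful. *)
Definition ternops (A : Type) := nat -> A -> A -> A -> A.

Definition prod4_op (A1 A2 A3 A4 : Type)
  (t1 : ternops A1) (t2 : ternops A2) (t3 : ternops A3) (t4 : ternops A4)
  (h : nat) (x y z : A1 * A2 * A3 * A4) : A1 * A2 * A3 * A4 :=
  let '(x1, x2, x3, x4) := x in
  let '(y1, y2, y3, y4) := y in
  let '(z1, z2, z3, z4) := z in
  (t1 h x1 y1 z1, t2 h x2 y2 z2, t3 h x3 y3 z3, t4 h x4 y4 z4).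

Definition inB (A1 A2 A3 A4 : Type) (o1 : A1) (o2 : A2) (o3 : A3) (a d : A4)
  (x : A1 * A2 * A3 * A4) : Prop :=
  let '(x1, x2, x3, x4) := x in
  (x2 = o2 /\ x4 = a) \/ (x1 = o1 /\ x2 = o2) \/ (x1 = o1 /\ x4 = d) \/ x3 = o3.

From mathcomp Require Import all_boot zify.

Set Implicit Arguments. Unset Strict Implicit. Unset Printing Implicit Defensive.

(* Membership of (w1,w2,w3,w4) in B(a,d) depends only on which of
   w1, w2, w3 equal the respective zeros, and on w4.  The key combinatorial fact
   ([inB_join]) is: if the zeros of w contain the zeros of both x and z, and w4
   agrees with x4 whenever x4 = z4, then x, z in B imply w in B.  (Two forms
   (*,0,*,a) and (0,*,*,d) together give (0,0,*,*); equal forms keep the fourth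
   coordinate.)  For an operation t_h of the product:
   - h = 1: in A1..A3 the zeros of x are absorbed on the left, and t_1 is the
     first projection in A4, so w inherits the pattern of x ([inB_mono]);
   - h = n-1: symmetrically w inherits the pattern of z;
   - 2 <= h <= n-2: zeros of x and of z are both absorbed
     ([zero_absorbs_middle]), and t_h(c,y,c) = c in A4, so [inB_join]
     applies. *)

Section FormsOfB.

Variables (A1 A2 A3 A4 : Type) (o1 : A1) (o2 : A2) (o3 : A3) (a d : A4).

Lemma inB_join (x1 z1 w1 : A1) (x2 z2 w2 : A2) (x3 z3 w3 : A3) (x4 z4 w4 : A4) :
  (x1 = o1 \/ z1 = o1 -> w1 = o1) ->
  (x2 = o2 \/ z2 = o2 -> w2 = o2) ->
  (x3 = o3 \/ z3 = o3 -> w3 = o3) ->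
  (x4 = z4 -> w4 = x4) ->
  inB o1 o2 o3 a d (x1, x2, x3, x4) -> inB o1 o2 o3 a d (z1, z2, z3, z4) ->
  inB o1 o2 o3 a d (w1, w2, w3, w4).
Proof.
rewrite /inB => E1 E2 E3 E4.
case=> [[x2o x4a]|[[x1o x2o]|[[x1o x4d]|x3o]]];
  case=> [[z2o z4a]|[[z1o z2o]|[[z1o z4d]|z3o]]];
  subst; intuition congruence.
Qed.

Lemma inB_mono (x1 w1 : A1) (x2 w2 : A2) (x3 w3 : A3) (w4 : A4) :
  (x1 = o1 -> w1 = o1) -> (x2 = o2 -> w2 = o2) -> (x3 = o3 -> w3 = o3) ->
  inB o1 o2 o3 a d (x1, x2, x3, w4) -> inB o1 o2 o3 a d (w1, w2, w3, w4).
Proof.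
move=> E1 E2 E3 Bx; apply: (inB_join _ _ _ _ Bx Bx) => //; tauto.
Qed.

End FormsOfB.

Lemma zero_absorbs_middle (A : Type) (t : ternops A) (o : A) (n : nat)
  (Hl : forall h, 1 <= h <= n - 2 -> forall y z, t h o y z = o)
  (Hr : forall h, 2 <= h <= n - 1 -> forall x y, t h x y o = o)
  (h : nat) : 2 <= h <= n - 2 ->
  forall x y z, x = o \/ z = o -> t h x y z = o.
Proof.
move=> hm x y z [->|->]; [apply: Hl | apply: Hr]; lia.
Qed.

Theorem theorem3p2 (n : nat) (hn : 3 <= n)
  (A1 A2 A3 A4 : Type)
  (t1 : ternops A1) (t2 : ternops A2) (t3 : ternops A3) (t4 : ternops A4)
  (o1 : A1) (o2 : A2) (o3 : A3)
  (H1l : forall h, 1 <= h <= n - 2 -> forall y z, t1 h o1 y z = o1)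
  (H1r : forall h, 2 <= h <= n - 1 -> forall x y, t1 h x y o1 = o1)
  (H2l : forall h, 1 <= h <= n - 2 -> forall y z, t2 h o2 y z = o2)
  (H2r : forall h, 2 <= h <= n - 1 -> forall x y, t2 h x y o2 = o2)
  (H3l : forall h, 1 <= h <= n - 2 -> forall y z, t3 h o3 y z = o3)
  (H3r : forall h, 2 <= h <= n - 1 -> forall x y, t3 h x y o3 = o3)
  (H4first : forall x y z, t4 1 x y z = x)
  (H4last : forall x y z, t4 (n - 1) x y z = z)
  (H4mid : forall h, 2 <= h <= n - 2 -> forall x y, t4 h x y x = x)
  (a d : A4) :
  forall h, 1 <= h <= n - 1 ->
  forall x y z : A1 * A2 * A3 * A4,
    inB o1 o2 o3 a d x -> inB o1 o2 o3 a d y -> inB o1 o2 o3 a d z ->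
    inB o1 o2 o3 a d (prod4_op t1 t2 t3 t4 h x y z).
Proof.
move=> h /andP[h_ge1 h_le] [[[x1 x2] x3] x4] y [[[z1 z2] z3] z4] Bx _ Bz.
case: y => [[[y1 y2] y3] y4] /=.
have [-> | h_ne1] := eqVneq h 1.
  have hl : 1 <= 1 <= n - 2 by lia.
  by rewrite H4first; apply: (inB_mono _ _ _ Bx) => ->;
    [apply: H1l | apply: H2l | apply: H3l].
have [-> | h_nelast] := eqVneq h (n - 1).
  have hr : 2 <= n - 1 <= n - 1 by lia.
  by rewrite H4last; apply: (inB_mono _ _ _ Bz) => ->;
    [apply: H1r | apply: H2r | apply: H3r].
have hm : 2 <= h <= n - 2 by lia.
apply: (inB_join _ _ _ _ Bx Bz) => [||| ->]; last exact: H4mid.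
- exact: zero_absorbs_middle H1l H1r h hm _ _ _.
- exact: zero_absorbs_middle H2l H2r h hm _ _ _.
- exact: zero_absorbs_middle H3l H3r h hm _ _ _.
Qed.
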